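(* For every finite simple graph $G$, $\chi_s(G)\le \tau(G)$.
   Context: $\tau(G)$ denotes the number of vertices in a longest path of $G$. A star colouring of $G$ is a proper vertex colouring in which every path on four vertices uses at least three distinct colours; the star chromatic number $\chi_s(G)$ is the least number of colours in a star colouring of $G$. *)

From mathcomp Require Import all_boot.
Set Implicit Arguments. Unset Strict Implicit. Unset Printing Implicit Defensive.

Definition simple_graph (T : finType) (e : rel T) : Prop :=
  symmetric e /\ irreflexive e.

Definition is_gpath (T : finType) (e : rel T) (s : seq T) : bool :=
  uniq s && (if s is x :: s' then path e x s' else true).

Definition has_path_on (T : finType) (e : rel T) (n : nat) : bool :=
  [exists t : n.-tuple T, is_gpath e t].

(* tau(G): number of vertices in a longest path (0 for the empty graph);
   a path has at most #|T| vertices. *)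
Definition tau (T : finType) (e : rel T) : nat :=
  \max_(n < #|T|.+1 | has_path_on e n) n.

Definition star_colouring (T : finType) (e : rel T) (k : nat)
    (c : {ffun T -> 'I_k}) : bool :=
  [forall x, forall y, e x y ==> (c x != c y)] &&
  [forall t : 4.-tuple T, is_gpath e t ==> (3 <= size (undup (map c t)))].

Definition star_colourable_k (T : finType) (e : rel T) (k : nat) : bool :=
  [exists c : {ffun T -> 'I_k}, star_colouring e c].

Lemma star_colourable (T : finType) (e : rel T) :
  simple_graph e -> exists k, star_colourable_k e k.
Proof.
move=> [_ irr]; exists #|T|; apply/existsP; exists [ffun x => enum_rank x].
apply/andP; split.
- apply/forallP=> x; apply/forallP=> y; apply/implyP=> exy.
  rewrite !ffunE; apply/negP=> /eqP/enum_rank_inj Exy.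
  by move: exy; rewrite Exy irr.
- apply/forallP=> t; apply/implyP=> /andP [ut _].
  rewrite undup_id; first by rewrite size_map size_tuple.
  rewrite map_inj_uniq // => x y; rewrite !ffunE; exact: enum_rank_inj.
Qed.

Definition chi_s (T : finType) (e : rel T) (G : simple_graph e) : nat :=
  ex_minn (star_colourable G).

From mathcomp Require Import all_boot.
Set Implicit Arguments. Unset Strict Implicit. Unset Printing Implicit Defensive.

(* Run a depth-first search of G.  Every edge of the resulting DFS forest
   joins a vertex to one of its ancestors, and the path from a root to any
   vertex is a path of G, so depths lie below tau(G).  Colour each vertex by
   its depth.  Adjacent vertices are ancestor-related, so they get different
   depths.  If a path a b c d were coloured x y x y, say with depth a <
   depth b, then a and c would both be ancestors of b at the same depth, so
   a = c; the case depth b < depth c symmetrically forces b = d. *)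

Section Paths.
Variables (T : finType) (e : rel T).

Lemma gpath_catl (Q R : seq T) : is_gpath e (Q ++ R) -> is_gpath e Q.
Proof.
case/andP; rewrite cat_uniq => /andP[uQ _]; rewrite /is_gpath uQ.
by case: Q uQ => //= x s _; rewrite cat_path => /andP[].
Qed.

Lemma gpath_rcons (Q : seq T) p r :
  is_gpath e (rcons Q p) -> r \notin rcons Q p -> e p r ->
  is_gpath e (rcons (rcons Q p) r).
Proof.
case/andP=> uQp pQp rQp epr; rewrite /is_gpath rcons_uniq rQp uQp.
by case: Q {uQp rQp} pQp => [|q s] /= pQp; rewrite ?andbT // rcons_path pQp last_rcons.
Qed.

Lemma size_gpath_le_tau (s : seq T) : is_gpath e s -> size s <= tau e.
Proof.
move=> gs; have /card_uniqP size_s := proj1 (andP gs).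
have lt_s : size s < #|T|.+1 by rewrite ltnS -size_s max_card.
have hs : has_path_on e (Ordinal lt_s) by apply/existsP; exists (in_tuple s).
exact: (@leq_bigmax_cond _ (fun n : 'I_#|T|.+1 => has_path_on e n) val _ hs).
Qed.

End Paths.

Lemma take_rcons_index (T : eqType) (s : seq T) x y : x \in s ->
  take (index x (rcons s y)).+1 (rcons s y) = take (index x s).+1 s.
Proof.
by move=> xs; rewrite -cats1 index_cat xs takel_cat // index_mem.
Qed.

Lemma three_leq_size_undup (T : eqType) (x y z : T) (s : seq T) :
  x != y -> y != z -> x != z -> x \in s -> y \in s -> z \in s -> 3 <= size (undup s).
Proof.
move=> nxy nyz nxz xs ys zs; apply: (@uniq_leq_size _ [:: x; y; z]).
  by rewrite /= !inE negb_or nxy nxz nyz.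
by apply/allP; rewrite /= !mem_undup xs ys zs.
Qed.

(* The root paths of a normal (Trémaux) spanning forest: [ch v] runs from the
   root of the tree of [v] down to [v], and lists exactly the ancestors of [v]. *)
Record normal_chains (T : finType) (e : rel T) (ch : T -> seq T) : Prop :=
  NormalChains {
    chain_gpath : forall v, is_gpath e (ch v);
    chain_self : forall v, v \in ch v;
    chain_prefix : forall v x, x \in ch v -> ch x = take (index x (ch v)).+1 (ch v);
    chain_edge : forall x y, e x y -> x \in ch y \/ y \in ch x }.

Section DepthFirstSearch.
Variables (T : finType) (e : rel T).
Hypothesis esym : symmetric e.

(* [S] is the set of unvisited vertices and [P] the current DFS stack.  The
   key invariant is [frontier_edge]: an unvisited vertex only sees visited
   vertices that are still on the stack, so popping a vertex without
   unvisited neighbours preserves it. *)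
Record dfs_state (S : {set T}) (P : seq T) (ch : T -> seq T) : Prop := DfsState {
  stack_gpath : is_gpath e P;
  stack_visited : forall x, x \in P -> x \notin S;
  visited_chain : forall v, v \notin S ->
    [/\ is_gpath e (ch v), v \in ch v &
        forall x, x \in ch v -> x \notin S /\ ch x = take (index x (ch v)).+1 (ch v)];
  stack_chain : forall p, p \in P -> ch p = take (index p P).+1 P;
  visited_edge : forall x y, x \notin S -> y \notin S -> e x y -> x \in ch y \/ y \in ch x;
  frontier_edge : forall x y, x \in S -> y \notin S -> e x y -> y \in P }.

Lemma dfs_init : dfs_state [set: T] [::] (fun=> [::]).
Proof.
split=> //; first by move=> v; rewrite in_setT.
  by move=> x y; rewrite in_setT.
by move=> x y _; rewrite in_setT.
Qed.

Lemma dfs_pop S Q p ch :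
  dfs_state S (rcons Q p) ch -> (forall x, x \in S -> ~~ e x p) -> dfs_state S Q ch.
Proof.
case=> gP vP hch sch vedge fedge noS; split=> //.
- by apply: (gpath_catl (R := [:: p])); rewrite cats1.
- by move=> x xQ; apply: vP; rewrite mem_rcons inE xQ orbT.
- by move=> q qQ; rewrite sch ?take_rcons_index // mem_rcons inE qQ orbT.
- move=> x y xS yS exy; have := fedge x y xS yS exy.
  by rewrite mem_rcons inE => /orP[/eqP yp | //]; move: exy; rewrite yp (negbTE (noS x xS)).
Qed.

Lemma dfs_push S P ch r :
  dfs_state S P ch -> r \in S -> is_gpath e (rcons P r) ->
  dfs_state (S :\ r) (rcons P r) (fun v => if v == r then rcons P r else ch v).
Proof.
case=> gP vP hch sch vedge fedge rS gPr.
set ch' := fun v => _.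
have rP : r \notin P by apply: contraL rS => /vP.
have visited_rcons x : x \in rcons P r -> x \notin S :\ r.
  rewrite mem_rcons inE !inE negb_and negbK => /orP[-> // | /vP ->].
  by rewrite orbT.
have chE v : v \notin S -> ch' v = ch v.
  by move=> vS; rewrite /ch'; case: eqP => // vr; move: vS; rewrite vr rS.
have stack_chain' p : p \in rcons P r -> ch' p = take (index p (rcons P r)).+1 (rcons P r).
  rewrite mem_rcons inE => /orP[/eqP -> | pP].
    rewrite /ch' eqxx -cats1 index_cat (negbTE rP) /= eqxx addn0.
    by rewrite -(size_rcons P r) cats1 take_size.
  by rewrite chE ?vP // sch // take_rcons_index.
split=> //.
- move=> v; rewrite !inE negb_and negbK => /orP[/eqP -> | vS].
    rewrite /ch' eqxx mem_rcons mem_head; split=> // x xP.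
    by rewrite -stack_chain' // visited_rcons.
  have [gv vv hx] := hch v vS; rewrite chE //; split=> // x /hx[xS chx].
  by rewrite chE // !inE negb_and xS orbT.
- move=> x y; rewrite !inE !negb_and !negbK.
  move=> /orP[/eqP -> | xS] /orP[/eqP -> | yS] exy.
  + by left; rewrite /ch' eqxx mem_rcons mem_head.
  + by right; rewrite /ch' eqxx mem_rcons inE (fedge r y) ?orbT.
  + by left; rewrite /ch' eqxx mem_rcons inE (fedge r x) ?orbT // esym.
  + by rewrite !chE //; apply: vedge.
- move=> x y; rewrite !inE negb_and negbK => /andP[_ xS] /orP[/eqP -> | yS] exy.
    by rewrite mem_rcons mem_head.
  by rewrite mem_rcons inE (fedge x) ?orbT.
Qed.

(* A push visits a vertex and lengthens the stack by one, a pop shortens it. *)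
Lemma dfs_step S P ch : dfs_state S P ch -> S != set0 ->
  exists S' P' ch', dfs_state S' P' ch' /\ #|S'|.*2 + size P' < #|S|.*2 + size P.
Proof.
move=> st /set0Pn[r0 r0S].
have card_push r : r \in S -> #|S :\ r|.*2.+1 < #|S|.*2.
  by move=> rS; rewrite [#|S|](cardsD1 r) rS add1n doubleS.
case: (lastP P) st => [| Q p] st.
  exists (S :\ r0), [:: r0]; eexists; split; first exact: (dfs_push st r0S).
  by rewrite addn0 addn1 card_push.
case: (pickP [pred r in S | e p r]) => [r /andP[rS epr] | noS].
  have rP : r \notin rcons Q p by apply: contraL rS => /(stack_visited st).
  exists (S :\ r), (rcons (rcons Q p) r); eexists; split.
    exact: (dfs_push st rS (gpath_rcons (stack_gpath st) rP epr)).
  by rewrite size_rcons addnS -addSn ltn_add2r card_push.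
exists S, Q, ch; split; last by rewrite size_rcons ltn_add2l.
by apply: (dfs_pop st) => x xS; rewrite esym; have /= := noS x; rewrite xS => /negbT.
Qed.

Lemma dfs_complete S P ch : dfs_state S P ch -> exists P' ch', dfs_state set0 P' ch'.
Proof.
have [n] := ubnP (#|S|.*2 + size P); elim: n S P ch => // n IH S P ch lt_n st.
have [S0 | S0] := eqVneq S set0; first by exists P, ch; rewrite -S0.
have [S' [P' [ch' [st' lt']]]] := dfs_step st S0.
by rewrite ltnS in lt_n; exact: IH (leq_trans lt' lt_n) st'.
Qed.

Lemma normal_chains_exist : exists ch, normal_chains e ch.
Proof.
have [P [ch [_ _ hch _ vedge _]]] := dfs_complete dfs_init.
have {}hch v := hch v (negbT (in_set0 v)).
exists ch; split=> [v | v | v x | x y].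
- by case: (hch v).
- by case: (hch v).
- by case: (hch v) => _ _ /(_ x) chx /chx[].
by apply: vedge; rewrite in_set0.
Qed.

End DepthFirstSearch.

Section DepthColouring.
Variables (T : finType) (e : rel T) (ch : T -> seq T).
Hypotheses (esym : symmetric e) (eirr : irreflexive e) (nch : normal_chains e ch).

Definition depth v := (size (ch v)).-1.

Lemma size_chain v : size (ch v) = (depth v).+1.
Proof. by rewrite /depth; case: (ch v) (chain_self nch v). Qed.

Lemma depth_mem x y : x \in ch y -> depth x = index x (ch y).
Proof. by move=> xy; rewrite /depth (chain_prefix nch xy) size_takel // index_mem. Qed.

Lemma depth_inj_mem x z y : x \in ch y -> z \in ch y -> depth x = depth z -> x = z.
Proof.
by move=> xy zy; rewrite (depth_mem xy) (depth_mem zy) => E; rewrite -(nth_index x xy) E nth_index.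
Qed.

Lemma depth_lt_mem x y : x \in ch y -> x != y -> depth x < depth y.
Proof.
move=> xy nxy; rewrite ltn_neqAle; apply/andP; split.
  by apply: contra nxy => /eqP E; apply/eqP; apply: depth_inj_mem xy (chain_self nch y) E.
by rewrite (depth_mem xy) -ltnS -size_chain index_mem.
Qed.

Lemma edge_depth_neq x y : e x y -> depth x != depth y.
Proof.
move=> exy; have nxy : x != y by apply: contraTneq exy => ->; rewrite eirr.
rewrite neq_ltn; case: (chain_edge nch exy) => [xy | yx].
  by rewrite (depth_lt_mem xy).
by rewrite (depth_lt_mem yx) ?orbT // eq_sym.
Qed.

Lemma edge_mem_deeper x y : e x y -> depth x < depth y -> x \in ch y.
Proof.
move=> exy lt_xy; case: (chain_edge nch exy) => // yx.
have nyx : y != x by apply: contraTneq exy => ->; rewrite eirr.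
by move: (depth_lt_mem yx nyx); rewrite ltnNge ltnW.
Qed.

Lemma depth_lt_tau v : depth v < tau e.
Proof. by rewrite -size_chain size_gpath_le_tau ?(chain_gpath nch). Qed.

Lemma depth_alternation a b c d : e a b -> e b c -> e c d -> a != c -> b != d ->
  (depth a != depth c) || (depth b != depth d).
Proof.
move=> eab ebc ecd nac nbd; rewrite -negb_and; apply/negP => /andP[/eqP Eac /eqP Ebd].
have := edge_depth_neq eab; rewrite neq_ltn => /orP[lt_ab | lt_ba].
  have ab := edge_mem_deeper eab lt_ab.
  have cb : c \in ch b by apply: edge_mem_deeper; rewrite 1?esym // -Eac.
  by move: nac; rewrite (depth_inj_mem ab cb Eac) eqxx.
have bc : b \in ch c by apply: edge_mem_deeper; rewrite // -Eac.
have dc : d \in ch c by apply: edge_mem_deeper; rewrite 1?esym // -Ebd -Eac.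
by move: nbd; rewrite (depth_inj_mem bc dc Ebd) eqxx.
Qed.

Definition depth_colouring : {ffun T -> 'I_(tau e)} := [ffun v => Ordinal (depth_lt_tau v)].

Lemma depth_colouring_eq x y : (depth_colouring x == depth_colouring y) = (depth x == depth y).
Proof. by rewrite -(inj_eq val_inj) /= !ffunE. Qed.

Lemma depth_colouring_star : star_colouring e depth_colouring.
Proof.
apply/andP; split.
  apply/forallP=> x; apply/forallP=> y; apply/implyP=> exy.
  by rewrite depth_colouring_eq edge_depth_neq.
apply/forallP=> -[s size_s]; apply/implyP.
case: s size_s => [|a [|b [|c [|d [|? ?]]]]] // ? /andP[uniq_t path_t].
rewrite /= !inE !negb_or andbT in uniq_t path_t.
case/and3P: uniq_t => /and3P[_ nac _] /andP[_ nbd] _.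
case/and4P: path_t => eab ebc ecd _.
have colour_mem x : x \in [:: a; b; c; d] ->
    depth_colouring x \in map depth_colouring [:: a; b; c; d] by apply: map_f.
have [Eac | Ebd] := orP (depth_alternation eab ebc ecd nac nbd).
  apply: (@three_leq_size_undup _ (depth_colouring a) (depth_colouring b) (depth_colouring c));
  by rewrite ?depth_colouring_eq ?(edge_depth_neq eab) ?(edge_depth_neq ebc) //
    colour_mem // !inE eqxx ?orbT.
apply: (@three_leq_size_undup _ (depth_colouring b) (depth_colouring c) (depth_colouring d));
by rewrite ?depth_colouring_eq ?(edge_depth_neq ebc) ?(edge_depth_neq ecd) //
  colour_mem // !inE eqxx ?orbT.
Qed.

End DepthColouring.

Theorem theorem3p1 (T : finType) (e : rel T) (G : simple_graph e) :
  chi_s G <= tau e.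
Proof.
have [esym eirr] := G.
have [ch nch] := normal_chains_exist esym.
rewrite /chi_s; case: ex_minnP => m _ minm; apply: minm.
by apply/existsP; exists (depth_colouring nch); exact: depth_colouring_star.
Qed.
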